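(* Let $M$ be a $0/1$-matrix, let $B$ be a block of $M$, and let $i,j$ be two entries of the input boundary $B^-$ with $i<j$ (in the input-boundary order). Let $\sigma(i)$ be an entry of the output boundary $B^+$ that is reachable from $i$, and let $\sigma(j)$ be an entry of $B^+$ that is reachable from $j$. If $\sigma(j)<\sigma(i)$ (in the output-boundary order), then $\sigma(j)$ is also reachable from $i$ and $\sigma(i)$ is also reachable from $j$.
   Context: Let $M$ be an $m\times n$ $0/1$-matrix with entries indexed $(r,s)$, $1\le r\le m$ (rows, thought of as increasing from bottom to top), $1\le s\le n$ (columns, increasing from left to right). A path from $(k,l)$ to $(i,j)$ is a sequence of $1$-entries starting at $(k,l)$ and ending at $(i,j)$ in which each step goes from $(r,s)$ to $(r+1,s)$, $(r,s+1)$ or $(r+1,s+1)$; $(i,j)$ is reachable from $(k,l)$ if such a path exists. A block $B$ is the submatrix formed by a contiguous range of rows $r^-\le r\le r^+$ and a contiguous range of columns $s^-\le s\le s^+$. Its input boundary $B^-$ consists of the entries in row $r^-$ or column $s^-$ of $B$, ordered as follows: first the entries of row $r^-$ from column $s^+$ down to column $s^-$, then the remaining entries of column $s^-$ from row $r^-+1$ up to $r^+$. Its output boundary $B^+$ consists of the entries in row $r^+$ or column $s^+$ of $B$, ordered as follows: first the entries of column $s^+$ from row $r^-$ up to row $r^+$, then the remaining entries of row $r^+$ from column $s^+-1$ down to $s^-$. *)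

From mathcomp Require Import all_boot all_algebra.
Set Implicit Arguments. Unset Strict Implicit. Unset Printing Implicit Defensive.

(* Entries of an m x n matrix are pairs (r, s) of ordinals; rows/columns are
   0-based here (the paper's row r corresponds to ordinal r-1). Rows increase
   "upwards", columns increase to the right. *)
Definition entry (m n : nat) := ('I_m * 'I_n)%type.

Section Defs.
Variables (m n : nat) (M : 'M[bool]_(m, n)).

Definition step (a b : entry m n) : bool :=
  [|| (b.1 == a.1.+1 :> nat) && (b.2 == a.2 :> nat),
      (b.1 == a.1 :> nat) && (b.2 == a.2.+1 :> nat)
    | (b.1 == a.1.+1 :> nat) && (b.2 == a.2.+1 :> nat)].

Definition is_one (a : entry m n) : bool := M a.1 a.2.

Definition reachable (x y : entry m n) : Prop :=
  exists s : seq (entry m n),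
    [&& path step x s, last x s == y & all is_one (x :: s)].
End Defs.

Record block := Block { rlo : nat; rhi : nat; slo : nat; shi : nat }.

Definition valid_block (m n : nat) (B : block) : Prop :=
  rlo B <= rhi B < m /\ slo B <= shi B < n.

Definition in_block m n (B : block) (a : entry m n) : bool :=
  (rlo B <= a.1 <= rhi B) && (slo B <= a.2 <= shi B).

Definition in_input m n (B : block) (a : entry m n) : bool :=
  in_block B a && ((a.1 == rlo B :> nat) || (a.2 == slo B :> nat)).

Definition in_output m n (B : block) (a : entry m n) : bool :=
  in_block B a && ((a.1 == rhi B :> nat) || (a.2 == shi B :> nat)).

(* position in the order of B^-: first row rlo from column shi down to slo,
   then column slo from row rlo+1 up to rhi *)
Definition input_rank m n (B : block) (a : entry m n) : nat :=
  if a.1 == rlo B :> nat then shi B - a.2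
  else (shi B - slo B) + (a.1 - rlo B).

(* position in the order of B^+: first column shi from row rlo up to rhi,
   then row rhi from column shi-1 down to slo *)
Definition output_rank m n (B : block) (a : entry m n) : nat :=
  if a.2 == shi B :> nat then a.1 - rlo B
  else (rhi B - rlo B) + (shi B - a.2).

From mathcomp Require Import all_boot all_algebra.
From mathcomp Require Import zify.
Set Implicit Arguments. Unset Strict Implicit.

(* If the two paths meet, exchanging their tails gives both claims.  Otherwise
   the path Q from j starts weakly to the left of the path P from i and, being
   monotone and disjoint from P, stays strictly to the left of some point of P
   as long as it does not climb above the last row of P.  Its end sj is thus
   strictly left of a point of P, hence strictly left of si, which contradicts
   the order of the output boundary. *)

Section MonotonePaths.
Variables (m n : nat).
Implicit Types (p q x y z : entry m n) (s t : seq (entry m n)).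

Lemma entry_inj x y : x.1 = y.1 :> nat -> x.2 = y.2 :> nat -> x = y.
Proof. by case: x y => [x1 x2] [y1 y2] /= /val_inj -> /val_inj ->. Qed.

Lemma stepP x y : step x y ->
  [/\ x.1 <= y.1 <= x.1.+1, x.2 <= y.2 <= x.2.+1
    & (y.2 == x.2 :> nat) ==> (y.1 == x.1.+1 :> nat)].
Proof. by rewrite /step => /or3P [] /andP [] /eqP h1 /eqP h2; split; lia. Qed.

Lemma path_le_last p s z : path (@step m n) p s -> z \in p :: s ->
  (z.1 <= (last p s).1) && (z.2 <= (last p s).2).
Proof.
elim: s p z => [|q s IH] p z /=; first by move=> _; rewrite inE => /eqP ->; rewrite !leqnn.
case/andP=> pq qs; rewrite inE => /orP [/eqP ->|]; last exact: IH.
have := IH q q qs (mem_head _ _); case/stepP: pq; lia.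
Qed.

Definition left_of s y := has (fun z : entry m n => (z.1 <= y.1) && (y.2 < z.2)) s.
Definition weakly_left_of s y :=
  has (fun z : entry m n => (z.1 <= y.1) && (y.2 <= z.2)) s.

Lemma on_or_left_of_cons p s y :
  (y \in s) || left_of s y -> (y \in p :: s) || left_of (p :: s) y.
Proof. by rewrite inE /left_of /= => /orP [] ->; rewrite !orbT. Qed.

(* Follow the path up the column of [y]: it either passes through [y] or
   leaves the column to the right at a row not above [y]. *)
Lemma path_column_climb p s q y : path (@step m n) p s -> q \in p :: s ->
  q.1 <= y.1 <= (last p s).1 -> q.2 = y.2 :> nat ->
  (y \in p :: s) || left_of (p :: s) y.
Proof.
elim: s p q => [|r s IH] p q /=.
  move=> _; rewrite inE => /eqP -> /andP [h1 h2] h3.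
  by rewrite (@entry_inj p y) ?mem_head //; lia.
case/andP=> pr rs; rewrite inE => /orP [/eqP ->{q}|qrs] hy hq; last first.
  exact/on_or_left_of_cons/(IH r q rs qrs hy hq).
have [->|pny] := eqVneq p y; first by rewrite mem_head.
have py : p.1 < y.1.
  have : p.1 != y.1 :> nat by apply: contra_neq pny => e; apply: entry_inj.
  by case/andP: hy; lia.
have [h1 h2 h3] := stepP pr.
have [rp|rp] := eqVneq (r.2 : nat) p.2.
  apply/on_or_left_of_cons/(IH r r rs (mem_head _ _)); last by rewrite rp.
  by move: h3 hy; rewrite rp eqxx /= => /eqP; lia.
have -> : (r.1 <= y.1) && (y.2 < r.2) by apply/andP; lia.
by rewrite !orbT.
Qed.

Lemma left_of_notin p s y : path (@step m n) p s ->
  weakly_left_of (p :: s) y -> y \notin p :: s -> y.1 <= (last p s).1 ->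
  left_of (p :: s) y.
Proof.
move=> ps /hasP [q qP /andP [q1 q2]] yP y1.
have [ltyq|leqy] := ltnP y.2 q.2; first by apply/hasP; exists q => //; apply/andP.
have e : q.2 = y.2 :> nat by apply/eqP; rewrite eqn_leq leqy.
have hy : q.1 <= y.1 <= (last p s).1 by rewrite q1.
by case/orP: (path_column_climb ps qP hy e) => // yin; rewrite yin in yP.
Qed.

Lemma left_of_step s y z : left_of s y -> step y z -> weakly_left_of s z.
Proof.
case/hasP=> q qs /andP [q1 q2] /stepP [h1 h2 _].
by apply/hasP; exists q => //; apply/andP; lia.
Qed.

Lemma disjoint_path_left_of p s x t :
  path (@step m n) p s -> path (@step m n) x t ->
  ~~ has (mem (p :: s)) (x :: t) ->
  {in x :: t, forall y, y.1 <= (last p s).1} ->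
  weakly_left_of (p :: s) x -> left_of (p :: s) (last x t).
Proof.
move=> ps; elim: t x => [|y t IH] x /= xt /norP [xP disj] low wx;
  have lx := left_of_notin ps wx xP (low x (mem_head _ _)) => //.
case/andP: xt => xy yt; apply: IH => // [z zt|]; last exact: left_of_step lx xy.
by apply: low; rewrite inE zt orbT.
Qed.

End MonotonePaths.

Section Reachability.
Variables (m n : nat) (M : 'M[bool]_(m, n)).

Lemma reachable_trans x y z : reachable M x y -> reachable M y z -> reachable M x z.
Proof.
move=> [s1 /and3P [p1 /eqP l1 a1]] [s2 /and3P [p2 /eqP l2 a2]].
exists (s1 ++ s2); rewrite cat_path l1 p1 p2 last_cat l1 l2 eqxx /=.
by move: a1 a2; rewrite /= all_cat => /andP [-> ->] /andP [_ ->].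
Qed.

Lemma reachable_through p s x :
  path (@step m n) p s -> all (is_one M) (p :: s) -> x \in p :: s ->
  reachable M p x /\ reachable M x (last p s).
Proof.
move=> ps al; rewrite inE => /orP [/eqP ->|xs].
  split; last by exists s; rewrite ps eqxx al.
  by exists [::]; rewrite /= eqxx andbT; case/andP: al.
case/splitPr: xs ps al => s1 s2; rewrite cat_path last_cat /= => /and3P [p1 st p2].
rewrite /= all_cat /= => /and4P [a0 a1 ax a2]; split.
  exists (rcons s1 x); rewrite rcons_path p1 st last_rcons eqxx /=.
  by rewrite a0 -cats1 all_cat a1 /= ax.
by exists s2; rewrite p2 eqxx /= ax a2.
Qed.

Lemma reachable_exchange p s q t x :
  path (@step m n) p s -> all (is_one M) (p :: s) ->
  path (@step m n) q t -> all (is_one M) (q :: t) ->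
  x \in p :: s -> x \in q :: t ->
  reachable M p (last q t) /\ reachable M q (last p s).
Proof.
move=> ps aP qt aQ xP xQ.
have [px xp] := reachable_through ps aP xP; have [qx xq] := reachable_through qt aQ xQ.
by split; [apply: reachable_trans xq | apply: reachable_trans xp].
Qed.

End Reachability.

Section Boundary.
Variables (m n : nat) (B : block).
Implicit Types x y : entry m n.

Lemma input_rank_lt x y : in_input B x -> in_input B y ->
  input_rank B x < input_rank B y -> x.1 <= y.1 /\ y.2 <= x.2.
Proof.
rewrite /in_input /in_block /input_rank.
move=> /andP [/andP [/andP [? ?] /andP [? ?]] ?] /andP [/andP [/andP [? ?] /andP [? ?]] ?].
by case: eqP; case: eqP; lia.
Qed.

Lemma output_rank_lt x y : in_output B x -> in_output B y ->
  output_rank B x < output_rank B y -> x.1 <= y.1 /\ y.2 <= x.2.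
Proof.
rewrite /in_output /in_block /output_rank.
move=> /andP [/andP [/andP [? ?] /andP [? ?]] ?] /andP [/andP [/andP [? ?] /andP [? ?]] ?].
by case: eqP; case: eqP; lia.
Qed.

End Boundary.

Theorem mainTheorem3 (m n : nat) (M : 'M[bool]_(m, n)) (B : block)
  (i j si sj : entry m n) :
  valid_block m n B ->
  in_input B i -> in_input B j ->
  input_rank B i < input_rank B j ->
  in_output B si -> reachable M i si ->
  in_output B sj -> reachable M j sj ->
  output_rank B sj < output_rank B si ->
  reachable M i sj /\ reachable M j si.
Proof.
move=> _ iB jB rij siB [P /and3P [iP /eqP eP aP]] sjB [Q /and3P [jQ /eqP eQ aQ]] rs.
subst si sj.
have [/hasP [x xQ xP] | disj] := boolP (has (mem (i :: P)) (j :: Q)).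
  exact: reachable_exchange iP aP jQ aQ xP xQ.
have [ij1 ij2] := input_rank_lt iB jB rij.
have [s1 s2] := output_rank_lt sjB siB rs.
have wj : weakly_left_of (i :: P) j by rewrite /weakly_left_of /= ij1 ij2.
have low : {in j :: Q, forall y : entry m n, y.1 <= (last i P).1}.
  by move=> y /(path_le_last jQ) /andP [y1 _]; apply: leq_trans s1.
have /hasP [q qP /andP [_ ltq]] := disjoint_path_left_of iP jQ disj low wj.
have /andP [_ q2] := path_le_last iP qP.
by have := leq_ltn_trans s2 (leq_trans ltq q2); rewrite ltnn.
Qed.
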